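(* Let $\mathcal{F}=\langle Q_i:i<\omega\rangle$ be a sequence of quantifiers on $\mathbb{N}$, each of which is a finite boolean combination of principal quantifiers $Q_{A_{i,k}}$ (with $A_{i,k}\subseteq\mathbb{N}^{d_i}$). Let $\mathrm{Aut}(\mathcal{F})$ be the group of permutations of $\mathbb{N}$ fixing every $Q_i$. Then $\mathrm{Aut}(\mathcal{F})$ is a closed subgroup of $S_\infty$, and every orbit of $\mathrm{Aut}(\mathcal{F})$ on $\mathbb{N}^{<\omega}$ is definable in $\mathscr{L}_{\omega_1\omega}(\mathcal{F})$.
   Context: For $A\subseteq\mathbb{N}^d$, the principal quantifier $Q_A=\{X\subseteq\mathbb{N}^d:A\subseteq X\}$ is a quantifier of type $\langle d\rangle$ on $\mathbb{N}$. A permutation $g$ of $\mathbb{N}$ acts coordinatewise on tuples and on subsets by $g(X)=\{g(x):x\in X\}$; $g$ fixes a quantifier $Q$ of type $\langle d\rangle$ if $X\in Q\iff g(X)\in Q$ for all $X\subseteq\mathbb{N}^d$. $S_\infty$ is the group of permutations of $\mathbb{N}$ with the topology of pointwise convergence. $\mathscr{L}_{\omega_1\omega}(\mathcal{F})$ extends $\mathscr{L}_{\omega_1\omega}$ by formulas $Q_ix\,\varphi(x,y)$ for each $i$, with $\mathbb{N}\models Q_ix\,\varphi(x,b)$ iff $\{a\in\mathbb{N}^{d_i}:\mathbb{N}\models\varphi(a,b)\}\in Q_i$. A set of tuples is definable in $\mathscr{L}_{\omega_1\omega}(\mathcal{F})$ if some parameter-free formula whose only non-logical symbols are the $Q_i$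 defines it in $\mathbb{N}$. *)

From mathcomp Require Import all_boot.
Set Implicit Arguments. Unset Strict Implicit. Unset Printing Implicit Defensive.

Definition tup (d : nat) := 'I_d -> nat.

Definition quant (d : nat) := (tup d -> Prop) -> Prop.

Definition principal (d : nat) (A : tup d -> Prop) : quant d :=
  fun X => forall a, A a -> X a.

Inductive bexpr : Type :=
| BAtom : nat -> bexpr
| BTrue : bexpr
| BFalse : bexpr
| BNeg : bexpr -> bexpr
| BAnd : bexpr -> bexpr -> bexpr
| BOr : bexpr -> bexpr -> bexpr.

Fixpoint beval (v : nat -> Prop) (e : bexpr) : Prop :=
  match e with
  | BAtom k => v k
  | BTrue => True
  | BFalse => False
  | BNeg e1 => ~ beval v e1
  | BAnd e1 e2 => beval v e1 /\ beval v e2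
  | BOr e1 e2 => beval v e1 \/ beval v e2
  end.

Definition bool_comb_quant (d : nat) (A : nat -> tup d -> Prop) (e : bexpr)
  : quant d := fun X => beval (fun k => principal (A k) X) e.

Definition img (g : nat -> nat) (d : nat) (X : tup d -> Prop) : tup d -> Prop :=
  fun b => exists a, X a /\ forall k, b k = g (a k).

Definition fixes_quant (g : nat -> nat) (d : nat) (Q : quant d) : Prop :=
  forall X, Q X <-> Q (img g X).

Definition in_Aut (d : nat -> nat) (Q : forall i, quant (d i)) (g : nat -> nat)
  : Prop := bijective g /\ forall i, fixes_quant g (Q i).

(* Subgroup of S_infinity (elements of P are assumed permutations). *)
Definition is_subgroup (P : (nat -> nat) -> Prop) : Prop :=
  [/\ P id,
      (forall g h, P g -> P h -> P (g \o h)) &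
      (forall g g', P g -> cancel g g' -> cancel g' g -> P g')].

(* Closed in S_infinity for the topology of pointwise convergence. *)
Definition is_closed_Sinf (P : (nat -> nat) -> Prop) : Prop :=
  forall h, bijective h ->
    (forall n, exists g, P g /\ forall x, x < n -> g x = h x) -> P h.

(* Formulas of L_{omega_1 omega}(F) with no non-logical symbols other than
   the Q_i: variables are natural numbers; countable conjunctions;
   Q_i binds a d_i-tuple of variables. *)
Inductive formula (d : nat -> nat) : Type :=
| FEq : nat -> nat -> formula d
| FNeg : formula d -> formula d
| FConj : (nat -> formula d) -> formula d
| FEx : nat -> formula d -> formula d
| FQ : forall i : nat, ('I_(d i) -> nat) -> formula d -> formula d.

Fixpoint fv_in (d : nat -> nat) (f : formula d) (S : nat -> Prop) : Prop :=
  match f with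
  | FEq x y => S x /\ S y
  | FNeg f1 => fv_in f1 S
  | FConj fs => forall k, fv_in (fs k) S
  | FEx x f1 => fv_in f1 (fun y => y = x \/ S y)
  | FQ i xs f1 => fv_in f1 (fun y => (exists k, xs k = y) \/ S y)
  end.

Definition upd (s : nat -> nat) (x v : nat) : nat -> nat :=
  fun y => if y == x then v else s y.

Definition upd_many (s : nat -> nat) (m : nat) (xs : 'I_m -> nat)
  (a : 'I_m -> nat) : nat -> nat :=
  fun y => match [pick k | xs k == y] with Some k => a k | None => s y end.

Fixpoint sat (d : nat -> nat) (Q : forall i, quant (d i)) (s : nat -> nat)
  (f : formula d) : Prop :=
  match f with
  | FEq x y => s x = s y
  | FNeg f1 => ~ sat Q s f1
  | FConj fs => forall k, sat Q s (fs k)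
  | FEx x f1 => exists v, sat Q (upd s x v) f1
  | FQ i xs f1 => Q i (fun a => sat Q (upd_many s xs a) f1)
  end.

Definition definable (d : nat -> nat) (Q : forall i, quant (d i)) (n : nat)
  (R : tup n -> Prop) : Prop :=
  exists f : formula d, fv_in f (fun y => y < n) /\
    forall s : nat -> nat, sat Q s f <-> R (fun k => s k).

Definition Aut_orbit (P : (nat -> nat) -> Prop) (n : nat) (a : tup n) : tup n -> Prop :=
  fun b => exists g, P g /\ forall k, b k = g (a k).

From Stdlib Require Import Classical ClassicalEpsilon FunctionalExtensionality PropExtensionality.
From mathcomp Require Import all_boot.
Set Implicit Arguments. Unset Strict Implicit. Unset Printing Implicit Defensive.

(* Whether a finite boolean combination of principal quantifiers holds of X depends only on X
   inside a finite box [0, N)^d, once every tuple leaving the box is added to X: each atom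
   "A ⊆ X" is either true or refuted by one tuple.  A permutation agreeing with h on [0, N)
   moves such a boxed set exactly as h does, which gives closedness.  For definability, two
   tuples satisfying the same L_{ω1ω}(F)-formulas extend by back-and-forth to enumerations S
   and g ∘ S of N that are equivalent on every finite prefix; a boxed set is definable from
   finitely many values of S by a countable conjunction, so g fixes every Q_i.  The orbit of a
   is then the countable conjunction of formulas excluding each finite assignment outside the
   type of a. *)

Lemma pred_ext (T : Type) (X Y : T -> Prop) : (forall a, X a <-> Y a) -> X = Y.
Proof.
by move=> XY; apply: functional_extensionality => a; apply: propositional_extensionality.
Qed.

Section Image.
Variable m : nat.
Implicit Types (X Y : tup m -> Prop) (g h : nat -> nat).

Lemma imgE g (g' : nat -> nat) X :
  cancel g g' -> cancel g' g -> forall b, img g X b <-> X (g' \o b).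
Proof.
move=> gK g'K b; split=> [[a [Xa bE]]|Xb].
- by have -> : g' \o b = a by apply: functional_extensionality => k /=; rewrite bE gK.
- by exists (g' \o b); split=> // k /=; rewrite g'K.
Qed.

Lemma img_id X : img id X = X.
Proof. by apply: pred_ext => b; rewrite (@imgE id id). Qed.

Lemma img_comp g h X : img (g \o h) X = img g (img h X).
Proof.
apply: pred_ext => b; split=> [[a [Xa bE]]|[c [[a [Xa cE]] bE]]].
- by exists (h \o a); split=> //; exists a.
- by exists a; split=> // k; rewrite bE cE.
Qed.

Lemma imgK g (g' : nat -> nat) X : cancel g g' -> cancel g' g -> img g (img g' X) = X.
Proof.
move=> gK g'K; apply: pred_ext => b; rewrite (imgE _ gK g'K) (imgE _ g'K gK).
by have -> : g \o (g' \o b) = b by apply: functional_extensionality => k /=.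
Qed.

Lemma img_sub g X Y : (forall t, X t -> Y t) -> forall b, img g X b -> img g Y b.
Proof. by move=> XY b [a [/XY Ya bE]]; exists a. Qed.

End Image.

Lemma Aut_subgroup (d : nat -> nat) (Q : forall i, quant (d i)) : is_subgroup (in_Aut Q).
Proof.
split.
- by split=> [|i X]; [exists id | rewrite img_id].
- move=> g h [bg gQ] [bh hQ]; split=> [|i X]; first exact: bij_comp.
  by rewrite img_comp -gQ; apply: hQ.
- move=> g g' [_ gQ] gK g'K; split=> [|i X]; first by exists g.
  by rewrite (gQ i (img g' X)) imgK.
Qed.

Definition bounded (N m : nat) (t : tup m) := forall j, t j < N.

Definition boxed (N m : nat) (X : tup m -> Prop) : tup m -> Prop :=
  fun t => bounded N t -> X t.

Lemma bounded_le N N' m (t : tup m) : N <= N' -> bounded N t -> bounded N' t.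
Proof. by move=> le bt j; apply: leq_trans (bt j) le. Qed.

Lemma bound_on_prefix (f : nat -> nat) M : exists N, forall x, x < M -> f x < N.
Proof.
exists (\max_(x < M) f x).+1 => x lt.
by rewrite ltnS (leq_bigmax (Ordinal lt)).
Qed.

Lemma bounded_exists m (t : tup m) : exists N, bounded N t.
Proof. by exists (\max_j t j).+1 => j; rewrite ltnS; apply: leq_bigmax. Qed.

Fixpoint atom_of (k : nat) (e : bexpr) : Prop :=
  match e with
  | BAtom j => j = k
  | BTrue | BFalse => False
  | BNeg e1 => atom_of k e1
  | BAnd e1 e2 | BOr e1 e2 => atom_of k e1 \/ atom_of k e2
  end.

Lemma beval_eq_on (e : bexpr) (v v' : nat -> Prop) :
  (forall k, atom_of k e -> (v k <-> v' k)) -> (beval v e <-> beval v' e).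
Proof.
elim: e => [j|||e IH|e1 IH1 e2 IH2|e1 IH1 e2 IH2] //= vv'; first exact: vv'.
- by rewrite IH.
- by rewrite IH1 ?IH2 // => k k_e; apply: vv'; [right|left].
- by rewrite IH1 ?IH2 // => k k_e; apply: vv'; [right|left].
Qed.

Lemma atoms_eventually (e : bexpr) (P : nat -> nat -> Prop) :
  (forall k N N', N <= N' -> P k N -> P k N') -> (forall k, exists N, P k N) ->
  exists N, forall k, atom_of k e -> P k N.
Proof.
move=> Pmono Pex; elim: e => [j|||e IH|e1 [N1 P1] e2 [N2 P2]|e1 [N1 P1] e2 [N2 P2]] /=.
- by have [N PN] := Pex j; exists N => k <-.
- by exists 0.
- by exists 0.
- exact: IH.
- by exists (maxn N1 N2) => k [/P1|/P2]; apply: Pmono; rewrite ?leq_maxl ?leq_maxr.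
- by exists (maxn N1 N2) => k [/P1|/P2]; apply: Pmono; rewrite ?leq_maxl ?leq_maxr.
Qed.

Section BoolCombQuant.
Variables (m : nat) (B : nat -> tup m -> Prop) (e : bexpr).
Let Q := bool_comb_quant B e.

Lemma bool_comb_quant_local X : exists N, forall Y,
  (forall t, X t -> Y t) -> (forall t, bounded N t -> Y t -> X t) -> (Q X <-> Q Y).
Proof.
pose P k N := principal (B k) X \/ exists a, [/\ B k a, ~ X a & bounded N a].
have [N PN] : exists N, forall k, atom_of k e -> P k N.
  apply: atoms_eventually => [k N N' le [?|[a [Ba nXa /(bounded_le le) ?]]]|k].
  - by left.
  - by right; exists a.
  - case: (classic (principal (B k) X)) => [?|nBX]; first by exists 0; left.
    have [a /(imply_to_and (B k a)) [Ba nXa]] := not_all_ex_not _ _ nBX.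
    by have [N ?] := bounded_exists a; exists N; right; exists a.
exists N => Y XY YX; apply: beval_eq_on => k /PN [BX|[a [Ba nXa ba]]].
- by split=> // _ b /BX /XY.
- by split=> BY; exfalso; [apply: nXa (BY a Ba) | apply: nXa (YX a ba (BY a Ba))].
Qed.

Lemma box_equiv h h' X : cancel h h' -> cancel h' h ->
  exists N, (Q X <-> Q (boxed N X)) /\ (Q (img h X) <-> Q (img h (boxed N X))).
Proof.
move=> hK h'K.
have [N1 QX] := bool_comb_quant_local X.
have [N2 QhX] := bool_comb_quant_local (img h X).
have [N3 h'N] := bound_on_prefix h' N2.
exists (maxn N1 N3); split.
- apply: QX => [t Xt _ //|t bt]; apply; exact: bounded_le (leq_maxl _ _) bt.
- apply: QhX => [|t bt]; first by apply: img_sub => t Xt _.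
  rewrite !(imgE _ hK h'K); apply=> j /=; exact: leq_trans (h'N _ (bt j)) (leq_maxr _ _).
Qed.

End BoolCombQuant.

(* [g] and [h] map [0, N) onto the same set, hence tuples leaving the box onto the same tuples. *)
Lemma img_boxed_agree m N (g g' h h' : nat -> nat) (X : tup m -> Prop) :
  cancel g g' -> cancel g' g -> cancel h h' -> cancel h' h ->
  (forall x, x < N -> g x = h x) -> img g (boxed N X) = img h (boxed N X).
Proof.
move=> gK g'K hK h'K gh.
have inv y : g' y < N \/ h' y < N -> g' y = h' y.
  by case=> lt; [rewrite -{2}(g'K y) gh // hK | rewrite -{1}(h'K y) -gh // gK].
apply: pred_ext => b; rewrite (imgE _ gK g'K) (imgE _ hK h'K) /boxed; split=> Xb bb.
- have E : g' \o b = h' \o b.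
    by apply: functional_extensionality => j /=; apply: inv; right; apply: bb.
  by rewrite -E; apply: Xb; rewrite E.
- have E : g' \o b = h' \o b.
    by apply: functional_extensionality => j /=; apply: inv; left; apply: bb.
  by rewrite E; apply: Xb; rewrite -E.
Qed.

Lemma Aut_closed (d : nat -> nat) (A : forall i : nat, nat -> tup (d i) -> Prop)
  (e : nat -> bexpr) : is_closed_Sinf (in_Aut (fun i => bool_comb_quant (A i) (e i))).
Proof.
move=> h [h' hK h'K] approx; split=> [|i X]; first by exists h'.
have [N [EX EhX]] := box_equiv (A i) (e i) X hK h'K.
have [g [[[g' gK g'K] gQ] gh]] := approx N.
by rewrite EX EhX -(img_boxed_agree _ gK g'K hK h'K gh); apply: gQ.
Qed.

Lemma upd_many_shift (s : nat -> nat) m M (a : 'I_m -> nat) (k : 'I_m) :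
  upd_many s (fun j : 'I_m => M + j) a (M + k) = a k.
Proof.
rewrite /upd_many; case: pickP => [k' /eqP/addnI/val_inj -> //|none].
by move: (none k); rewrite eqxx.
Qed.

Lemma upd_many_below (s : nat -> nat) m M (a : 'I_m -> nat) y :
  y < M -> upd_many s (fun j : 'I_m => M + j) a y = s y.
Proof.
move=> lt; rewrite /upd_many; case: pickP => [k /eqP E|//].
by move: lt; rewrite -E ltnNge leq_addr.
Qed.

Definition decode_tuple {m} (k : nat) : tup m := fun j =>
  if unpickle k is Some F then (F : {ffun 'I_m -> nat}) j else 0.

Lemma decode_tuple_onto m (w : tup m) : exists k, decode_tuple k = w.
Proof.
exists (pickle [ffun j : 'I_m => w j]); apply: functional_extensionality => j.
by rewrite /decode_tuple pickleK ffunE.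
Qed.

Definition decode_prefix (k : nat) : nat -> nat :=
  nth 0 (odflt [::] (unpickle k : option (seq nat))).

Lemma decode_prefix_onto m (s : nat -> nat) :
  exists k, forall y, y < m -> decode_prefix k y = s y.
Proof.
exists (pickle (map s (iota 0 m))) => y lt.
by rewrite /decode_prefix pickleK /= (nth_map 0) ?size_iota // nth_iota.
Qed.

Section Formulas.
Variables (d : nat -> nat) (Q : forall i, quant (d i)).
Implicit Types (f : formula d) (S : nat -> Prop) (s t : nat -> nat).

Lemma fv_in_sub f S S' : fv_in f S -> (forall y, S y -> S' y) -> fv_in f S'.
Proof.
elim: f S S' => [x y|f IH|fs IH|x f IH|i xs f IH] S S' /=.
- by case=> ? ? SS'; split; apply: SS'.
- exact: IH.
- by move=> fvs SS' k; apply: IH (fvs k) SS'.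
- by move=> fv SS'; apply: IH fv _ => y [->|/SS']; [left|right].
- by move=> fv SS'; apply: IH fv _ => y [xy|/SS']; [left|right].
Qed.

Lemma sat_eq_on f S s t :
  fv_in f S -> (forall y, S y -> s y = t y) -> (sat Q s f <-> sat Q t f).
Proof.
elim: f S s t => [x y|f IH|fs IH|x f IH|i xs f IH] S s t /=.
- by case=> Sx Sy st; rewrite (st x Sx) (st y Sy).
- by move=> fv st; rewrite (IH S s t fv st).
- by move=> fvs st; split=> sf k; [rewrite -(IH k S s t) | rewrite (IH k S s t)].
- move=> fv st; have upd_eq v y : y = x \/ S y -> upd s x v y = upd t x v y.
    by rewrite /upd; case: eqP => // _ [//|/st].
  split=> [[v sv]|[v tv]]; exists v; first by rewrite -(IH _ _ _ fv (upd_eq v)).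
  by rewrite (IH _ _ _ fv (upd_eq v)).
- move=> fv st.
  have -> // : (fun a => sat Q (upd_many s xs a) f) = (fun a => sat Q (upd_many t xs a) f).
  apply: pred_ext => a; apply: (IH _ _ _ fv) => y; rewrite /upd_many.
  case: pickP => [//|none] [[k xk]|/st //].
  by move: (none k); rewrite xk eqxx.
Qed.

Lemma sat_Aut g : in_Aut Q g -> forall f s, sat Q s f <-> sat Q (g \o s) f.
Proof.
case=> [[g' gK g'K] gQ]; elim=> [x y|f IH|fs IH|x f IH|i xs f IH] s /=.
- by split=> [->|/(can_inj gK)].
- by rewrite (IH s).
- by split=> sf k; [rewrite -IH | rewrite IH].
- have updE v : upd (g \o s) x (g v) = g \o upd s x v.
    by apply: functional_extensionality => y; rewrite /upd /=; case: (y == x).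
  split=> [[v sv]|[v gsv]]; first by exists (g v); rewrite updE -IH.
  by exists (g' v); rewrite IH -updE g'K.
- have updE a : upd_many (g \o s) xs (g \o a) = g \o upd_many s xs a.
    by apply: functional_extensionality => y; rewrite /upd_many /=; case: pickP.
  have -> : (fun a => sat Q (upd_many (g \o s) xs a) f) =
      img g (fun a => sat Q (upd_many s xs a) f).
    apply: pred_ext => b; rewrite (imgE _ gK g'K) (IH (upd_many s xs (g' \o b))) -updE.
    by have -> : g \o (g' \o b) = b by apply: functional_extensionality => k /=.
  exact: gQ.
Qed.

Definition ftrue : formula d := FEx 0 (FEq d 0 0).

Lemma sat_ftrue s : sat Q s ftrue.
Proof. by exists 0. Qed.

Lemma fv_ftrue S : fv_in ftrue S.
Proof. by split; left. Qed.

Definition fconj_ord m (F : 'I_m -> formula d) : formula d :=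
  FConj (fun j => if insub j is Some k then F k else ftrue).

Lemma sat_fconj_ord m (F : 'I_m -> formula d) s :
  sat Q s (fconj_ord F) <-> forall k, sat Q s (F k).
Proof.
split=> [sF k | sF j]; first by move: (sF k); rewrite /= valK.
by case: insubP => [k _ _|_]; [apply: sF | apply: sat_ftrue].
Qed.

Lemma fv_fconj_ord m (F : 'I_m -> formula d) S :
  (forall k, fv_in (F k) S) -> fv_in (fconj_ord F) S.
Proof. by move=> fvF j /=; case: insubP => [k _ _|_]; [apply: fvF | apply: fv_ftrue]. Qed.

End Formulas.

Section Types.
Variables (d : nat -> nat) (Q : forall i, quant (d i)).
Implicit Types (f : formula d) (s t : nat -> nat).

Definition tequiv m s t := forall f, fv_in f (fun y => y < m) -> (sat Q s f <-> sat Q t f).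

Lemma tequiv_sym m s t : tequiv m s t -> tequiv m t s.
Proof. by move=> st f fv; rewrite (st f fv). Qed.

Lemma tequiv_eq_on m s t u : (forall y, y < m -> t y = u y) -> tequiv m s t -> tequiv m s u.
Proof. by move=> tu st f fv; rewrite (st f fv); apply: sat_eq_on fv tu. Qed.

Lemma tequiv_Aut m g s : in_Aut Q g -> tequiv m s (g \o s).
Proof. by move=> gQ f _; apply: sat_Aut. Qed.

Lemma separating_formula m s t : exists f, [/\ fv_in f (fun y => y < m), sat Q s f &
  (sat Q t f -> tequiv m s t)].
Proof.
case: (classic (tequiv m s t)) => [st|/not_all_ex_not [f /(imply_to_and (fv_in f _)) [fv nst]]].
  by exists (ftrue d); split; [apply: fv_ftrue | apply: sat_ftrue |].
case: (classic (sat Q s f)) => sf; first by exists f; split=> // tf; case: nst; split.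
by exists (FNeg f); split=> // ntf; case: nst; split=> // /sf.
Qed.

(* Each of the countably many finite assignments outside the type of [s] is excluded
   by one formula. *)
Lemma tequiv_definable m s :
  exists f, fv_in f (fun y => y < m) /\ forall t, sat Q t f <-> tequiv m s t.
Proof.
have [F sepF] := choice _ (fun k => separating_formula m s (decode_prefix k)).
exists (FConj F); split=> [k|t]; first by case: (sepF k).
split=> [tF | st k]; last by case: (sepF k) => fv sF _; apply/(st _ fv).
have [k kt] := decode_prefix_onto m t; case: (sepF k) => fv _ sep.
apply: (tequiv_eq_on kt (sep _)); by rewrite (sat_eq_on Q fv kt).
Qed.

Lemma tequiv_forth m s t c : tequiv m s t -> exists c', tequiv m.+1 (upd s m c) (upd t m c').
Proof.
move=> st; apply: NNPP => none.
have [G sepG] := choice _ (fun c' => separating_formula m.+1 (upd s m c) (upd t m c')).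
have fvG : fv_in (FEx m (FConj G)) (fun y => y < m).
  move=> k /=; case: (sepG k) => fv _ _; apply: fv_in_sub fv _ => y.
  by rewrite ltnS leq_eqVlt => /orP [/eqP ->|]; [left|right].
have [c' tG] : sat Q t (FEx m (FConj G)) by rewrite -(st _ fvG); exists c => k; case: (sepG k).
by apply: none; exists c'; case: (sepG c') => _ _; apply; apply: tG.
Qed.

Definition forth_witness m s t c : nat :=
  epsilon (inhabits 0) (fun c' => tequiv m.+1 (upd s m c) (upd t m c')).

Lemma forth_witnessP m s t c : tequiv m s t ->
  tequiv m.+1 (upd s m c) (upd t m (forth_witness m s t c)).
Proof. by move=> st; apply: (epsilon_spec _ _ (tequiv_forth c st)). Qed.

Section BackAndForth.
Variables (n : nat) (s0 t0 : nat -> nat).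
Hypothesis st0 : tequiv n s0 t0.

(* Stage [x] assigns position [n + 2x] to [x] on the left and [n + 2x + 1] to [x] on the right. *)
Fixpoint bf_stage (x : nat) : (nat -> nat) * (nat -> nat) :=
  if x is x'.+1 then
    let: (s, t) := bf_stage x' in
    let k := n + x'.*2 in
    let s1 := upd s k x' in let t1 := upd t k (forth_witness k s t x') in
    (upd s1 k.+1 (forth_witness k.+1 t1 s1 x'), upd t1 k.+1 x')
  else (s0, t0).

Lemma bf_stage_tequiv x : tequiv (n + x.*2) (bf_stage x).1 (bf_stage x).2.
Proof.
elim: x => [|x IH] /=; first by rewrite addn0.
case: (bf_stage x) IH => s t /= IH; rewrite doubleS !addnS.
apply/tequiv_sym/forth_witnessP/tequiv_sym; exact: forth_witnessP.
Qed.

Lemma bf_stage_stable x x' y : x <= x' -> y < n + x.*2 ->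
  (bf_stage x').1 y = (bf_stage x).1 y /\ (bf_stage x').2 y = (bf_stage x).2 y.
Proof.
move=> le lt; elim: x' le => [|x' IH]; first by rewrite leqn0 => /eqP ->.
rewrite leq_eqVlt ltnS => /orP [/eqP <- //|le].
have lt' : y < n + x'.*2 by apply: leq_trans lt _; rewrite leq_add2l leq_double.
have [ne ne1] : y != n + x'.*2 /\ y != (n + x'.*2).+1.
  by split; rewrite neq_ltn ?ltnS ?(ltnW lt') ?lt'.
rewrite -(proj1 (IH le)) -(proj2 (IH le)) /=; case: (bf_stage x') => s t.
by rewrite /upd /= (negbTE ne) (negbTE ne1).
Qed.

Definition bf_left y := (bf_stage y.+1).1 y.
Definition bf_right y := (bf_stage y.+1).2 y.

Lemma bf_limit x y : y < n + x.*2 ->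
  bf_left y = (bf_stage x).1 y /\ bf_right y = (bf_stage x).2 y.
Proof.
move=> lt; have lt1 : y < n + y.+1.*2 by apply: ltn_addl; rewrite -addnn addSn ltnS leq_addr.
have [l1 r1] := bf_stage_stable (leq_maxl x y.+1) lt.
have [l2 r2] := bf_stage_stable (leq_maxr x y.+1) lt1.
by rewrite /bf_left /bf_right -l2 -r2 l1 r1.
Qed.

Lemma bf_tequiv m : tequiv m bf_left bf_right.
Proof.
have le : m <= n + m.*2 by rewrite -addnn addnA leq_addl.
move=> f fv; have fv' : fv_in f (fun y => y < n + m.*2).
  by apply: fv_in_sub fv _ => y /leq_trans; apply.
rewrite (sat_eq_on Q fv' (t := (bf_stage m).1)); last by move=> y /bf_limit [].
rewrite (sat_eq_on Q fv' (s := bf_right) (t := (bf_stage m).2)); last by move=> y /bf_limit [].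
exact: bf_stage_tequiv.
Qed.

Lemma bf_eq i j : bf_left i = bf_left j <-> bf_right i = bf_right j.
Proof.
have := @bf_tequiv (maxn i j).+1 (FEq d i j).
by apply; split; rewrite /= ltnS ?leq_maxl ?leq_maxr.
Qed.

Lemma bf_init y : y < n -> bf_left y = s0 y /\ bf_right y = t0 y.
Proof. by move=> lt; apply: (bf_limit (x := 0)); rewrite addn0. Qed.

Lemma bf_left_forth x : bf_left (n + x.*2) = x.
Proof.
have lt : n + x.*2 < n + x.+1.*2 by rewrite ltn_add2l doubleS ltnS ltnW.
have [-> _] := bf_limit lt; rewrite /=; case: (bf_stage x) => s t /=.
by rewrite /upd eqxx (ltn_eqF (ltnSn _)).
Qed.

Lemma bf_right_back x : bf_right (n + x.*2).+1 = x.
Proof.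
have lt : (n + x.*2).+1 < n + x.+1.*2 by rewrite doubleS !addnS ltnS ltnSn.
by have [_ ->] := bf_limit lt; rewrite /=; case: (bf_stage x) => s t /=; rewrite /upd eqxx.
Qed.

Definition bf_perm x := bf_right (n + x.*2).
Definition bf_perm_inv y := bf_left (n + y.*2).+1.

Lemma bf_perm_left j : bf_perm (bf_left j) = bf_right j.
Proof. by apply/bf_eq; rewrite bf_left_forth. Qed.

Lemma bf_permK : cancel bf_perm bf_perm_inv.
Proof. by move=> x; rewrite -{2}(bf_left_forth x); apply/bf_eq; rewrite bf_right_back. Qed.

Lemma bf_perm_invK : cancel bf_perm_inv bf_perm.
Proof. by move=> y; rewrite bf_perm_left bf_right_back. Qed.

End BackAndForth.
End Types.

Section BoxFormula.
Variables (d : nat -> nat) (Q : forall i, quant (d i)) (par : nat -> nat) (i N M : nat).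
Variable X : tup (d i) -> Prop.
Hypothesis parM : forall c, c < N -> par c < M.
Let xs (k : 'I_(d i)) := M + k.

Definition box_set (s : nat -> nat) : tup (d i) -> Prop :=
  fun a => ~ exists w, [/\ bounded N w, ~ X w & forall k, a k = s (par (w k))].

Definition box_atom (w : tup (d i)) : formula d :=
  if excluded_middle_informative (bounded N w /\ ~ X w)
  then fconj_ord (fun k => FEq d (xs k) (par (w k))) else FNeg (ftrue d).

(* With parameter [c] at variable [par c]: the tuple at [xs] is no tuple of the box outside [X]. *)
Definition box_formula : formula d :=
  @FQ d i xs (FConj (fun k => FNeg (box_atom (decode_tuple k)))).

Lemma fv_box_formula : fv_in box_formula (fun y => y < M).
Proof.
move=> k; rewrite /box_atom; destruct excluded_middle_informative as [[bw nXw]|nw].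
- by apply: fv_fconj_ord => j; split; [left; exists j | right; apply: parM].
- exact: fv_ftrue.
Qed.

Lemma sat_box_atom s a w : sat Q (upd_many s xs a) (box_atom w) <->
  [/\ bounded N w, ~ X w & forall k, a k = s (par (w k))].
Proof.
rewrite /box_atom; destruct excluded_middle_informative as [[bw nXw]|nw]; last first.
  by split=> [[]|[bw nXw _]]; [apply: sat_ftrue | case: nw].
rewrite sat_fconj_ord; split=> [aw|[_ _ aw] k] /=; last first.
  by rewrite upd_many_shift upd_many_below ?aw //; apply: parM.
by split=> // k; move: (aw k); rewrite /= upd_many_shift upd_many_below //; apply: parM.
Qed.

Lemma sat_box_formula s : sat Q s box_formula <-> @Q i (box_set s).
Proof.
rewrite /box_formula /=.
suff -> : (fun a => forall k, ~ sat Q (upd_many s xs a) (box_atom (decode_tuple k))) = box_set s.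
  by [].
apply: pred_ext => a; split=> [sa [w wa] | nw k /sat_box_atom wa].
  by have [k kw] := decode_tuple_onto w; apply: (sa k); apply/sat_box_atom; rewrite kw.
by apply: nw; exists (decode_tuple k).
Qed.

Lemma box_set_img s p p' : (forall c, s (par c) = p c) -> cancel p p' -> cancel p' p ->
  box_set s = img p (boxed N X).
Proof.
move=> sp pK p'K; apply: pred_ext => a; rewrite (imgE _ pK p'K).
split=> [na bw|Xa [w [bw nXw aw]]].
- apply: NNPP => nXw; apply: na; exists (p' \o a); split=> // k; by rewrite sp /= p'K.
- have wE : p' \o a = w by apply: functional_extensionality => k /=; rewrite aw sp pK.
  by apply: nXw; rewrite -wE; apply: Xa; rewrite wE.
Qed.

End BoxFormula.

Section BoolCombAut.
Variables (d : nat -> nat) (A : forall i : nat, nat -> tup (d i) -> Prop) (e : nat -> bexpr).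
Let Q := fun i => bool_comb_quant (@A i) (e i).

(* [Q i X] reduces to [Q i] of a boxed set, defined by [box_formula] from finitely many
   values of [S]. *)
Lemma Aut_of_tequiv_enum (S par g g' : nat -> nat) : cancel g g' -> cancel g' g ->
  (forall c, S (par c) = c) -> (forall m, tequiv Q m S (g \o S)) -> in_Aut Q g.
Proof.
move=> gK g'K Spar SgS; split=> [|i X]; first by exists g'.
have [N [EX EgX]] := box_equiv (@A i) (e i) X gK g'K.
have [M parM] := bound_on_prefix par N.
have := SgS M _ (fv_box_formula X parM).
rewrite !sat_box_formula // (box_set_img _ _ Spar (fun _ => erefl) (fun _ => erefl)).
have gSpar c : (g \o S) (par c) = g c by rewrite /= Spar.
by rewrite (box_set_img _ _ gSpar gK g'K) img_id /Q /= EX EgX.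
Qed.

Lemma tequiv_extend_Aut n s t : tequiv Q n s t ->
  exists g, in_Aut Q g /\ forall y, y < n -> g (s y) = t y.
Proof.
move=> st; exists (bf_perm Q n s t); split.
- apply: (Aut_of_tequiv_enum (bf_permK st) (bf_perm_invK st) (bf_left_forth Q n s t)).
  move=> m f fv; rewrite (bf_tequiv st fv); apply: (sat_eq_on Q fv) => y _ /=.
  by rewrite bf_perm_left.
- by move=> y lt; have [<- <-] := bf_init Q s t lt; rewrite bf_perm_left.
Qed.

End BoolCombAut.

Definition assign n (a : tup n) (y : nat) : nat := if insub y is Some k then a k else 0.

Lemma assign_ord n (a : tup n) (k : 'I_n) : assign a k = a k.
Proof. by rewrite /assign valK. Qed.

Theorem proposition23 (d : nat -> nat)
  (A : forall i : nat, nat -> tup (d i) -> Prop) (e : nat -> bexpr) :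
  let Q := fun i => bool_comb_quant (A i) (e i) in
  (is_subgroup (in_Aut Q) /\ is_closed_Sinf (in_Aut Q)) /\
  (forall (n : nat) (a : tup n), definable Q (Aut_orbit (in_Aut Q) a)).
Proof.
move=> Q; split; first by split; [exact: Aut_subgroup | exact: Aut_closed].
move=> n a; have [f [fv f_type]] := tequiv_definable Q n (assign a).
exists f; split=> // s; rewrite f_type; split.
- case/tequiv_extend_Aut=> g [gQ ga]; exists g; split=> // k.
  by rewrite -(ga k (ltn_ord k)) assign_ord.
- case=> g [gQ ga]; apply: (tequiv_eq_on _ (tequiv_Aut (m := n) (assign a) gQ)) => y lt /=.
  by rewrite (ga (Ordinal lt)) -(assign_ord a (Ordinal lt)).
Qed.
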